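(* Let $q$ be a power of a prime $p$, let $c \in \mathbb{F}_q$, let $n \geq 2$ and let $W \subseteq \{0,1,\ldots,n\}$. If $q = 2$, further assume that $n \notin W$. Then: (i) If the least period of the function $\gamma_{W,c} : \mathbb{Z}_{q^n-1} \to \mathbb{F}_q$ given by $\gamma_{W,c} = \sum_{w \in W} (-1)^w \delta_w - c\,\delta_0$ is not a divisor of $(q^n-1)/\Phi_n(q)$, then there exists an irreducible polynomial $P(x)$ of degree $n$ over $\mathbb{F}_q$ such that $S_{n-W}(P) \neq c$. (ii) If the least period of the function $\Delta_{W,c} : \mathbb{Z}_{q^n-1} \to \mathbb{F}_q$ given by $\Delta_{W,c} = \delta_0 - \left( \sum_{w \in W}(-1)^w \delta_w - c\,\delta_0 \right)^{\otimes (q-1)}$ is not a divisor of $(q^n-1)/\Phi_n(q)$, then there exists an irreducible polynomial $P(x)$ of degree $n$ over $\mathbb{F}_q$ such that $S_{n-W}(P) = c$.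
   Context: $\Phi_n(x) \in \mathbb{Z}[x]$ is the $n$-th cyclotomic polynomial. For $h(x)\in\mathbb{F}_q[x]$ of degree $n$ and $V \subseteq \{0,\ldots,n\}$, $S_V(h) := \sum_{v \in V}[x^v]h(x)$ (sum of the coefficients of $x^v$, $v \in V$), and $n - W := \{n - w : w \in W\}$. Define $\Omega(0) = \{0\} \subseteq \mathbb{Z}_{q^n-1}$ and, for $1 \le w \le n$, $\Omega(w)$ is the set of $k \in \mathbb{Z}_{q^n-1}$ whose canonical representative in $\{0,1,\ldots,q^n-2\}$ equals $q^{i_1} + \cdots + q^{i_w}$ for some integers $0 \le i_1 < \cdots < i_w \le n-1$; $\delta_w : \mathbb{Z}_{q^n-1} \to \{0,1\} \subseteq \mathbb{F}_p \subseteq \mathbb{F}_q$ is the indicator function of $\Omega(w)$ (so $\delta_0$ is the Kronecker delta at $0$). For $f,g : \mathbb{Z}_N \to \mathbb{F}_q$ the convolution is $(f \otimes g)(i) = \sum_{j+k=i,\ j,k \in \mathbb{Z}_N} f(j)g(k)$, and $f^{\otimes m}$ is the $m$-fold convolution of $f$ with itself. A function $f : \mathbb{Z}_N \to \mathbb{F}_q$ is $r$-periodic ($r \in \mathbb{N}$) if $f(i) = f(i + r)$ for all $i \in \mathbb{Z}_N$; its least period is the smallest such positive integer $r$. *)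

From HB Require Import structures.
From mathcomp Require Import all_boot all_order all_algebra all_field.
Set Implicit Arguments. Unset Strict Implicit. Unset Printing Implicit Defensive.
Import Order.TTheory GRing.Theory Num.Theory.
Local Open Scope ring_scope.

(* k \in Omega(w) (k given by its canonical representative in {0,..,q^n-2}):
   k = q^{i_1} + ... + q^{i_w} for some 0 <= i_1 < ... < i_w <= n-1,
   i.e. k is the sum of q^i over a w-element subset of {0,..,n-1}. *)
Definition inOmega (q n w k : nat) : bool :=
  [exists I : {set 'I_n}, (#|I| == w) && (k == \sum_(i in I) q ^ i)%N].

Definition delta (F : nzRingType) (q n N w : nat) (k : 'I_N) : F :=
  (inOmega q n w k)%:R.

Definition conv (F : nzRingType) (N : nat) (f g : 'I_N -> F) (i : 'I_N) : F :=
  \sum_(j : 'I_N) \sum_(k : 'I_N | ((j + k) %% N)%N == i) f j * g k.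

Definition convpow (F : nzRingType) (N m : nat) (f : 'I_N -> F) : 'I_N -> F :=
  iter m.-1 (conv f) f.

Definition periodic (F : Type) (N : nat) (f : 'I_N -> F) (r : nat) : Prop :=
  forall i j : 'I_N, nat_of_ord j = ((i + r) %% N)%N -> f i = f j.

Definition is_least_period (F : Type) (N : nat) (f : 'I_N -> F) (r : nat) : Prop :=
  (0 < r)%N /\ periodic f r /\ forall r', (0 < r')%N -> (r' < r)%N -> ~ periodic f r'.

Definition cycquot (q n : nat) : int :=
  (((q ^ n - 1)%N)%:Z %/ ('Phi_n).[q%:Z])%Z.

Definition Ssum (F : nzRingType) (n : nat) (V : {set 'I_n.+1}) (h : {poly F}) : F :=
  \sum_(v in V) h`_v.

Definition negset (n : nat) (W : {set 'I_n.+1}) : {set 'I_n.+1} :=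
  [set rev_ord w | w in W].

Definition gammaWc (F : finFieldType) (n : nat) (W : {set 'I_n.+1}) (c : F)
  (k : 'I_(#|F| ^ n - 1)) : F :=
  \sum_(w in W) (-1) ^+ w * delta F #|F| n w k
  - c * delta F #|F| n 0 k.

Definition DeltaWc (F : finFieldType) (n : nat) (W : {set 'I_n.+1}) (c : F)
  (k : 'I_(#|F| ^ n - 1)) : F :=
  delta F #|F| n 0 k - convpow (#|F|.-1) (gammaWc W c) k.

From HB Require Import structures.
From mathcomp Require Import all_boot all_order all_algebra all_field.
From mathcomp Require Import zify ring.
From Stdlib Require Import Classical.
Import GRing.Theory.
Local Open Scope ring_scope.

(* Let L be the field with q^n elements, N = q^n - 1 and M = (q^n - 1)/Phi_n(q).
   To h : Z_N -> F_q attach G_h(a) = sum_k h(k) a^k for a in L^*; it turns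
   convolution into multiplication.  If a <> 0 and a^M <> 1, then a lies in no
   proper subfield F_(q^d) of L, because q^d - 1 divides M for every proper
   divisor d of n; hence P_a = prod_(i<n) (X - a^(q^i)) is irreducible over F_q.
   Its coefficient of X^(n-w) is (-1)^w sum_(|I| = w) a^(sum_(i in I) q^i), so
   G_gamma(a) = S_(n-W)(P_a) - c and G_Delta(a) = 1 - (S_(n-W)(P_a) - c)^(q-1).
   If every irreducible P had S_(n-W)(P) = c (resp. S_(n-W)(P) <> c), then
   G_gamma (resp. G_Delta) would vanish at every such a.  The polynomial
   sum_k (h(k - M) - h(k)) X^k of degree < N equals (x^M - 1) G_h(x) on L^*,
   so it would vanish at all N points of L^*, hence be zero: h would be
   M-periodic, and its least period would divide M. *)

Section Periods.
Local Open Scope nat_scope.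
Context {T : eqType} {N : nat} (f : 'I_N -> T).

Definition periodicb r :=
  [forall i : 'I_N, forall j : 'I_N, (j == (i + r) %% N :> nat) ==> (f i == f j)].

Lemma periodicP r : reflect (periodic f r) (periodicb r).
Proof.
apply: (iffP forallP) => [fP i j ij | fP i].
  by have /forallP/(_ j)/implyP/(_ (introT eqP ij))/eqP := fP i.
by apply/forallP => j; apply/implyP => /eqP/fP/eqP.
Qed.

Lemma periodic0 : periodic f 0.
Proof. by move=> i j; rewrite addn0 modn_small // => /val_inj ->. Qed.

Lemma periodicN : periodic f N.
Proof. by move=> i j; rewrite modnDr modn_small // => /val_inj ->. Qed.

Hypothesis N_gt0 : 0 < N.

Lemma periodicD {a b} : periodic f a -> periodic f b -> periodic f (a + b).
Proof.
move=> fa fb i j ij; pose k := Ordinal (ltn_pmod (i + a) N_gt0).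
by rewrite (fa i k) //; apply: fb; rewrite /= modnDml ij addnA.
Qed.

Lemma periodicMn {a} t : periodic f a -> periodic f (a * t).
Proof.
move=> fa; elim: t => [|t IHt]; first by rewrite muln0; apply: periodic0.
by rewrite mulnS; apply: periodicD.
Qed.

Lemma periodic_addl {a b} : periodic f a -> periodic f (a + b) -> periodic f b.
Proof.
move=> fa fab i j ij; pose k := Ordinal (ltn_pmod (j + a) N_gt0).
rewrite (fab i k); last by rewrite /= ij modnDml -addnA (addnC b) addnA.
by symmetry; apply: fa.
Qed.

Lemma least_period_exists : exists r, is_least_period f r.
Proof.
have exP : exists r, (0 < r) && periodicb r.
  by exists N; rewrite N_gt0; apply/periodicP/periodicN.
case: (ex_minnP exP) => r /andP[r_gt0 /periodicP fr] r_min.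
exists r; split=> //; split=> // r' r'_gt0 lt_r'r /periodicP fr'.
by have := r_min r'; rewrite r'_gt0 fr' leqNgt lt_r'r => /(_ isT).
Qed.

Lemma least_period_dvdn {r m} : is_least_period f r -> periodic f m -> r %| m.
Proof.
move=> [r_gt0 [fr r_min]] fm; apply: contraT => r_ndvd.
exfalso; apply: (r_min (m %% r)); [by rewrite lt0n | by rewrite ltn_pmod |].
by apply: (periodic_addl (periodicMn (m %/ r) fr)); rewrite mulnC -divn_eq.
Qed.

Lemma nonperiodic_least_period_ndvdn m :
  (forall r, is_least_period f r -> ~~ (r %| m)) -> ~ periodic f m.
Proof.
move=> ndvd fm; have [r fr] := least_period_exists.
by have := ndvd r fr; rewrite (least_period_dvdn fr fm).
Qed.

End Periods.

Section Digits.
Local Open Scope nat_scope.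
Variable q : nat.
Hypothesis q_gt1 : 1 < q.

Lemma q_expn_gt0 i : 0 < q ^ i.
Proof. by rewrite expn_gt0 (ltnW q_gt1). Qed.

Lemma mul_subn1_sum_expn m : (q - 1) * \sum_(i < m) q ^ i = q ^ m - 1.
Proof.
elim: m => [|m IHm]; first by rewrite big_ord0 muln0.
rewrite big_ord_recr /= mulnDr IHm expnS.
have := q_expn_gt0 m; have : q ^ m <= q * q ^ m by rewrite leq_pmull // ltnW.
rewrite mulnBl mul1n mulnC; lia.
Qed.

Lemma sum_expn_lt m : \sum_(i < m) q ^ i < q ^ m.
Proof.
have := mul_subn1_sum_expn m; have := q_expn_gt0 m.
have : \sum_(i < m) q ^ i <= (q - 1) * \sum_(i < m) q ^ i.
  by rewrite leq_pmull // subn_gt0.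
lia.
Qed.

Context {n : nat}.

Definition expsum (I : {set 'I_n}) := \sum_(i in I) q ^ i.

Lemma expsum_split (I : {set 'I_n}) (j : 'I_n) :
  expsum I = \sum_(i in I | i < j) q ^ i + (j \in I) * q ^ j
             + q ^ j.+1 * \sum_(i in I | j < i) q ^ (i - j.+1).
Proof.
rewrite /expsum (bigID (fun i : 'I_n => i < j)) /= -addnA; congr (_ + _).
rewrite (bigID (pred1 j)) /=; congr (_ + _).
  case: (boolP (j \in I)) => jI.
    rewrite (big_pred1 j) ?mul1n // => i /=.
    by case: eqP => [->|]; rewrite ?jI ?ltnn ?andbF ?andbT.
  rewrite mul0n big_pred0 // => i /=.
  by case: eqP => [->|]; rewrite ?(negbTE jI) ?andbF.
rewrite big_distrr /=; apply: eq_big => [i|i /andP[/andP[_ ij] nji]].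
  rewrite -andbA; congr (_ && _); rewrite -leqNgt ltn_neqAle eq_sym.
  by case: (i == j); rewrite ?andbF ?andbT // andbC.
by rewrite -expnD subnKC // ltn_neqAle eq_sym nji leqNgt ij.
Qed.

Lemma expsum_digit (I : {set 'I_n}) (j : 'I_n) :
  (expsum I %/ q ^ j) %% q = (j \in I).
Proof.
have low_lt : \sum_(i in I | i < j) q ^ i < q ^ j.
  apply: leq_ltn_trans (sum_expn_lt j).
  rewrite (big_ord_widen_cond n (fun=> true) (fun i => q ^ i)); last exact: ltnW.
  rewrite big_mkcond [X in _ <= X]big_mkcond /=; apply: leq_sum => i _.
  by case: (i \in I); case: (i < j).
rewrite (expsum_split I j); set low := \sum_(i in I | i < j) _ in low_lt *.
set high := \sum_(i in I | j < i) _.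
have -> : low + (j \in I) * q ^ j + q ^ j.+1 * high =
           ((j \in I) + q * high) * q ^ j + low.
  by rewrite expnS; ring.
rewrite divnMDl ?q_expn_gt0 // divn_small // addn0 addnC mulnC modnMDl.
by rewrite modn_small //; case: (j \in I) => //; apply: ltnW.
Qed.

Lemma expsum_inj : injective expsum.
Proof.
move=> I J IJ; apply/setP => j; have := expsum_digit I j.
by rewrite IJ expsum_digit; case: (j \in I); case: (j \in J).
Qed.

Lemma expsum_lt (I : {set 'I_n}) : 0 < n -> (2 < q) || (I != setT) ->
  expsum I < q ^ n - 1.
Proof.
move=> n_gt0; have sum_geq := mul_subn1_sum_expn n.
have I_le : expsum I <= \sum_(i < n) q ^ i.
  by rewrite [X in _ <= X](bigID (mem I)) /= leq_addr.
case/orP=> [q_gt2 | /eqP I_neqT].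
  have : 1 <= \sum_(i < n) q ^ i by rewrite (bigD1 (Ordinal n_gt0)) //= leq_addr.
  have : 2 * \sum_(i < n) q ^ i <= (q - 1) * \sum_(i < n) q ^ i.
    by rewrite leq_mul2r ltn_subRL addn1 q_gt2 orbT.
  lia.
have [j jI] : exists j, j \notin I.
  case: (pickP [pred j | j \notin I]) => [j jI|noj]; first by exists j.
  by case: I_neqT; apply/setP => i; rewrite inE; move/negbFE: (noj i).
have : expsum I + q ^ j <= \sum_(i < n) q ^ i.
  by rewrite [X in _ <= X](bigID (mem I)) /= leq_add2l (bigD1 j) //= leq_addr.
have : \sum_(i < n) q ^ i <= (q - 1) * \sum_(i < n) q ^ i.
  by rewrite leq_pmull // subn_gt0.
have := q_expn_gt0 j; lia.
Qed.

End Digits.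

Lemma natz_expn_subn1 (q n : nat) : (0 < q)%N -> ((q ^ n - 1)%N)%:Z = q%:Z ^+ n - 1.
Proof. by move=> q_gt0; rewrite -subzn ?expn_gt0 ?q_gt0 // -!natz natrX. Qed.

Section CyclotomicQuotient.
Context {q n : nat}.
Hypotheses (q_gt1 : (1 < q)%N) (n_gt0 : (0 < n)%N).

Let Phi_proper : {poly int} := \prod_(e <- divisors n | e != n) 'Phi_e.

Lemma Xn_sub1_Phi_proper : 'X^n - 1 = 'Phi_n * Phi_proper.
Proof.
rewrite -prod_Cyclotomic // (bigD1_seq n) ?divisors_uniq //=.
by rewrite -dvdn_divisors.
Qed.

Lemma Xn_sub1_dvd_Phi_proper {d} : (0 < d)%N -> (d %| n)%N -> (d < n)%N ->
  exists R : {poly int}, Phi_proper = ('X^d - 1) * R.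
Proof.
move=> d_gt0 dn dltn.
exists (\prod_(e <- divisors n | (e != n) && ~~ (e %| d)%N) 'Phi_e).
rewrite /Phi_proper (bigID (fun e => (e %| d)%N)) /=; congr (_ * _).
rewrite -prod_Cyclotomic // -big_filter; apply: perm_big.
apply: uniq_perm; rewrite ?filter_uniq ?divisors_uniq // => e.
rewrite mem_filter -!dvdn_divisors //.
apply/idP/idP => [/andP[/andP[_ ->]]//|ed].
rewrite ed (dvdn_trans ed dn) !andbT; apply/eqP => en.
by have := dvdn_leq d_gt0 ed; rewrite en leqNgt dltn.
Qed.

Lemma cycquotE : cycquot q n = Phi_proper.[q%:Z].
Proof.
have PhiE : ((q ^ n - 1)%N)%:Z = ('Phi_n).[q%:Z] * Phi_proper.[q%:Z].
  by rewrite (natz_expn_subn1 _ _ (ltnW q_gt1)) -hornerM -Xn_sub1_Phi_proper !hornerE.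
rewrite /cycquot PhiE mulKz //; apply/eqP => Phi0; move: PhiE.
rewrite Phi0 mul0r => /eqP; rewrite eqz_nat subn_eq0 leqNgt.
by rewrite -[1%N](expn0 q) ltn_exp2l // n_gt0.
Qed.

Lemma expn_subn1_dvd_cycquot {d} : (0 < d)%N -> (d %| n)%N -> (d < n)%N ->
  ((q ^ d - 1) %| `|cycquot q n|)%N.
Proof.
move=> d_gt0 dn dltn; rewrite cycquotE.
have [R ->] := Xn_sub1_dvd_Phi_proper d_gt0 dn dltn.
rewrite hornerM abszM dvdn_mulr //.
by rewrite !hornerE -(natz_expn_subn1 _ _ (ltnW q_gt1)) absz_nat.
Qed.

End CyclotomicQuotient.

Lemma natr_card_finField (F : finFieldType) : (#|F|%:R : F) = 0.
Proof.
have [p p_pr pcharF] := finPcharP F.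
apply/eqP; rewrite -(dvdn_pcharf pcharF) (card_pprimeChar pcharF) dvdn_exp //.
rewrite lt0n; apply: contraTneq (finNzRing_gt1 F) => logp0.
by rewrite (card_pprimeChar pcharF) logp0.
Qed.

Lemma expf_card_pred (F : finFieldType) (x : F) : x != 0 -> x ^+ #|F|.-1 = 1.
Proof.
move=> x0; apply: (mulIf x0); rewrite mul1r -exprSr prednK ?expf_card //.
exact: ltnW (finNzRing_gt1 F).
Qed.

(* Adapted from the proof of pPrimePowerField: L is the splitting field of
   X^(q^n) - X, whose q^n roots are all of L. *)
Lemma finField_extension (F : finFieldType) {n : nat} : (0 < n)%N ->
  {L : splittingFieldType F | \dim {:L} = n}.
Proof.
move=> n_gt0; pose m := (#|F| ^ n)%N.
have F_gt1 : (1 < #|F|)%N by apply: finNzRing_gt1.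
have m_gt1 : (1 < m)%N by rewrite -(expn0 #|F|) ltn_exp2l.
have m_gt0 := ltnW m_gt1; have m1_gt0: (m.-1 > 0)%N by rewrite -ltnS prednK.
pose Xm (R : nzRingType) : {poly R} := 'X^m - 'X.
have XmE (R : nzRingType) : Xm R = ('X^(m.-1) - 1) * ('X - 0).
  by rewrite subr0 mulrBl mul1r -exprSr prednK.
have /FinSplittingFieldFor[/= L splitLXm]: Xm F != 0.
  by rewrite XmE monic_neq0 ?rpredM ?monicXsubC ?monicXnsubC.
rewrite [map_poly _ _]rmorphB rmorphXn /= map_polyX -/(Xm L) in splitLXm.
have mL0 : (m%:R : L) = 0.
  rewrite -(rmorph_nat (in_alg L)) /m natrX natr_card_finField.
  by rewrite expr0n gtn_eqF // rmorph0.
exists L; pose Fm := FinFieldExtType L.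
have /finField_galois_generator[/= a _ Da]: (1 <= {:L})%VS by apply: sub1v.
pose Em := fixedSpace (a ^+ n)%g; rewrite dimv1 expn1 in Da.
have{splitLXm} [zs XmL defL] := splitLXm.
have Uzs: uniq zs.
  rewrite -separable_prod_XsubC -(eqp_separable XmL) XmE separable_root andbC.
  rewrite /root !hornerE subr_eq0 eq_sym expr0n gtn_eqF ?oner_eq0 //=.
  rewrite cyclotomic.separable_Xn_sub_1 // -subn1 natrB // subr_eq0.
  by rewrite mL0 eq_sym oner_eq0.
have cardFm : #|Fm| = m.
  suffices /eq_card->: Fm =i zs.
    apply: succn_inj; rewrite (card_uniqP _) //= -(size_prod_XsubC _ id).
    by rewrite -(eqp_size XmL) size_polyDl size_polyXn // size_polyN size_polyX.
  have in_zs: zs =i Em.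
    move=> z; rewrite -root_prod_XsubC -(eqp_root XmL) (sameP fixedSpaceP eqP).
    rewrite /root !hornerE subr_eq0 /= /m; congr (_ == z).
    elim: (n) => [|i IHi]; first by rewrite gal_id.
    by rewrite expgSr expnSr exprM IHi galM ?Da ?memvf.
  suffices defEm: Em = {:L}%VS by move=> z; rewrite in_zs defEm memvf.
  apply/eqP; rewrite eqEsubv subvf -defL -[Em]subfield_closed agenvS //.
  by rewrite subv_add sub1v; apply/span_subvP=> z; rewrite in_zs.
have := card_vspace (fullv : {vspace finvect_type L}).
by rewrite card_vspacef [#|_|]cardFm => /eqP; rewrite eqn_exp2l // => /eqP.
Qed.

Lemma inOmega0 (q n k : nat) : inOmega q n 0 k = (k == 0)%N.
Proof.
apply/existsP/eqP => [[I /andP[/eqP/cards0_eq-> /eqP->]]|->].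
  exact: big_set0.
by exists set0; rewrite cards0 big_set0.
Qed.

Lemma sum_expsum_inOmega {R : nzRingType} {q n w : nat} (x : R) :
  (1 < q)%N -> (0 < n)%N ->
  (forall I : {set 'I_n}, #|I| = w -> (expsum q I < q ^ n - 1)%N) ->
  \sum_(I : {set 'I_n} | #|I| == w) x ^+ expsum q I =
  \sum_(k : 'I_(q ^ n - 1)) (inOmega q n w k)%:R * x ^+ k.
Proof.
move=> q_gt1 n_gt0 lt_w; pose A := [set I : {set 'I_n} | #|I| == w].
have N_gt0 : (0 < q ^ n - 1)%N by rewrite subn_gt0 -(expn0 q) ltn_exp2l.
pose h (I : {set 'I_n}) : 'I_(q ^ n - 1) :=
  Ordinal (ltn_pmod (expsum q I) N_gt0).
have hE I : I \in A -> h I = expsum q I :> nat.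
  by rewrite inE => /eqP/lt_w; apply: modn_small.
have h_inj : {in A &, injective h}.
  move=> I J IA JA /(congr1 (@nat_of_ord _)).
  by rewrite !hE //; apply: expsum_inj.
have hA : h @: A = [set k : 'I_(q ^ n - 1) | inOmega q n w k].
  apply/setP => k; rewrite inE.
  apply/imsetP/existsP => [[I IA ->]|[I /andP[/eqP IA /eqP kE]]].
    by exists I; rewrite hE // !eqxx andbT; rewrite inE in IA.
  by exists I; rewrite ?inE ?IA //; apply: ord_inj; rewrite hE // inE IA.
rewrite (eq_bigl (fun I => I \in A)) => [|I]; last by rewrite inE.
rewrite (eq_bigr (fun I => x ^+ h I)) => [|I IA]; last by rewrite hE.
rewrite -(big_imset (fun k : 'I_(q ^ n - 1) => x ^+ k) h_inj) hA big_mkcond /=.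
by apply: eq_bigr => k _; rewrite inE; case: (inOmega _ _ _ _); rewrite ?mul1r ?mul0r.
Qed.

Section CycEval.
Context {F : finFieldType} {L : fieldExtType F} {n : nat}.
Hypotheses (n_gt0 : (0 < n)%N) (dimL : \dim {:L} = n).
Local Notation q := #|F|.
Local Notation N := (q ^ n - 1)%N.

Lemma card_expn_subn1_gt0 : (0 < N)%N.
Proof. by rewrite subn_gt0 -(expn0 q) ltn_exp2l // finNzRing_gt1. Qed.

Lemma card_ext : #|finvect_type L| = (q ^ n)%N.
Proof.
have := card_vspace (fullv : {vspace finvect_type L}).
by rewrite card_vspacef dimL.
Qed.

Lemma expr_card_ext (x : L) : x ^+ (q ^ n) = x.
Proof. by apply/eqP; rewrite -dimL -Fermat's_little_theorem memvf. Qed.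

Lemma expr_card_unit_ext {x : L} : x != 0 -> x ^+ N = 1.
Proof.
move=> x0; apply: (mulIf x0); rewrite mul1r -exprSr subn1 prednK ?expr_card_ext //.
by rewrite expn_gt0 ltnW // finNzRing_gt1.
Qed.

Definition modN (k : nat) : 'I_N := Ordinal (ltn_pmod k card_expn_subn1_gt0).

Lemma modN_ord (k : 'I_N) : modN k = k.
Proof. by apply: val_inj; rewrite /= modn_small. Qed.

Definition cyc_eval (h : 'I_N -> F) (x : L) := \sum_(k : 'I_N) (h k)%:A * x ^+ k.

Lemma cyc_evalB (h1 h2 : 'I_N -> F) x :
  cyc_eval (fun k => h1 k - h2 k) x = cyc_eval h1 x - cyc_eval h2 x.
Proof. by rewrite -sumrB; apply: eq_bigr => k _; rewrite scalerBl mulrBl. Qed.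

Lemma cyc_evalZ (a : F) (h : 'I_N -> F) x :
  cyc_eval (fun k => a * h k) x = a *: cyc_eval h x.
Proof.
by rewrite scaler_sumr; apply: eq_bigr => k _; rewrite -scalerA -scalerAl.
Qed.

Lemma cyc_eval_sum (I : finType) (P : pred I) (h : I -> 'I_N -> F) x :
  cyc_eval (fun k => \sum_(i | P i) h i k) x = \sum_(i | P i) cyc_eval (h i) x.
Proof.
rewrite /cyc_eval exchange_big /=; apply: eq_bigr => k _.
by rewrite scaler_suml mulr_suml.
Qed.

Lemma cyc_eval_delta w x :
  (forall I : {set 'I_n}, #|I| = w -> (expsum q I < N)%N) ->
  cyc_eval (delta F q n w) x = \sum_(I : {set 'I_n} | #|I| == w) x ^+ expsum q I.
Proof.
move=> lt_w; rewrite (sum_expsum_inOmega x (finNzRing_gt1 F) n_gt0 lt_w).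
by apply: eq_bigr => k _; rewrite /delta -in_algE rmorph_nat.
Qed.

Lemma cyc_eval_delta0 x : cyc_eval (delta F q n 0) x = 1.
Proof.
rewrite /cyc_eval (bigD1 (modN 0)) //= big1 => [|k k0]; rewrite /delta inOmega0.
  by rewrite /= mod0n scale1r mul1r addr0.
by move: k0; rewrite -(inj_eq val_inj) /= mod0n => /negbTE->; rewrite scale0r mul0r.
Qed.

Lemma cyc_eval_conv (h1 h2 : 'I_N -> F) x : x != 0 ->
  cyc_eval (conv h1 h2) x = cyc_eval h1 x * cyc_eval h2 x.
Proof.
move=> x0; rewrite /cyc_eval /conv mulr_suml.
under eq_bigr => i _ do rewrite scaler_suml mulr_suml.
rewrite exchange_big /=; apply: eq_bigr => j _; rewrite mulr_sumr.
under eq_bigr => i _ do rewrite scaler_suml mulr_suml big_mkcond /=.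
rewrite exchange_big /=; apply: eq_bigr => k _; rewrite -big_mkcond /=.
rewrite (big_pred1 (modN (j + k))) => [|i]; last first.
  by rewrite /= -(inj_eq val_inj).
rewrite /= (expr_mod _ (expr_card_unit_ext x0)) exprD.
by rewrite -!in_algE rmorphM /=; ring.
Qed.

Lemma cyc_eval_convpow (h : 'I_N -> F) m x : x != 0 -> (0 < m)%N ->
  cyc_eval (convpow m h) x = cyc_eval h x ^+ m.
Proof.
move=> x0; case: m => // m _; rewrite /convpow /=.
elim: m => [|m IHm]; first by rewrite expr1.
by rewrite iterS cyc_eval_conv // IHm !exprS.
Qed.

Lemma periodic_cyc_eval (g : 'I_N -> F) m :
  (forall x : L, x != 0 -> x ^+ m != 1 -> cyc_eval g x = 0) -> periodic g m.
Proof.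
move=> g0; pose shift (j : 'I_N) := modN (j + m).
have shift_inj : injective shift.
  move=> j j' /(congr1 val) /= /eqP; rewrite eqn_modDr !modn_small //.
  by move/eqP/val_inj.
pose U := \poly_(k < N)
  ((g (invF shift_inj (modN k)))%:A - (g (modN k))%:A : L).
have UE x : x != 0 -> U.[x] = (x ^+ m - 1) * cyc_eval g x.
  move=> x0; rewrite horner_poly mulrBl mul1r /cyc_eval mulr_sumr.
  under eq_bigr => k _ do rewrite modN_ord mulrBl.
  rewrite sumrB; congr (_ - _); rewrite (reindex_inj shift_inj).
  apply: eq_bigr => j _; rewrite invF_f /= expr_mod ?expr_card_unit_ext // exprD.
  by rewrite mulrA mulrC.
have U0 : U = 0.
  apply: (@roots_geq_poly_eq0 _ _ (enum (predC1 0 : pred (finvect_type L)))).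
  - apply/allP => x; rewrite mem_enum /= => x0.
    by apply/rootP; rewrite UE //; case: (eqVneq (x ^+ m) 1) => [->|/g0->//];
      rewrite ?subrr ?mul0r ?mulr0.
  - exact: enum_uniq.
  by rewrite -cardE cardC1 card_ext -subn1 size_poly.
move=> i j ij; have := congr1 (fun p : {poly L} => p`_j) U0.
rewrite coef_poly ltn_ord modN_ord coef0 => /eqP; rewrite subr_eq0 => /eqP.
have -> : invF shift_inj j = i.
  by rewrite (_ : j = shift i) ?invF_f //; apply: val_inj.
by rewrite -!in_algE => /fmorph_inj.
Qed.

End CycEval.

Section Frobenius.
Context {F : finFieldType} (L : fieldExtType F).
Local Notation q := #|F|.

Lemma mem1v_expr_card (x : L) : (x \in 1%VS) = (x ^+ q == x).
Proof. by have := Fermat's_little_theorem 1%AS x; rewrite /= dimv1 expn1. Qed.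

Lemma expr_cardD (x y : L) : (x + y) ^+ q = x ^+ q + y ^+ q.
Proof.
have [p _ pcharF] := finPcharP F; rewrite (card_pprimeChar pcharF).
elim: (logn _ _) => [|k IHk]; first by rewrite !expr1.
rewrite expnSr !exprM {}IHk.
by rewrite -(pchar_lalg L) in pcharF; rewrite -!(pFrobenius_autE pcharF) rmorphD.
Qed.

Definition frobenius_card (x : L) := x ^+ q.

Lemma frobenius_card_is_zmod_morphism : zmod_morphism frobenius_card.
Proof.
by move=> x y; rewrite /frobenius_card -[in RHS](subrK y x) [in RHS]expr_cardD addrK.
Qed.

Lemma frobenius_card_is_monoid_morphism : monoid_morphism frobenius_card.
Proof. by split=> [|x y]; rewrite /frobenius_card ?expr1n ?exprMn. Qed.

HB.instance Definition _ := GRing.isZmodMorphism.Build L L frobenius_card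
  frobenius_card_is_zmod_morphism.
HB.instance Definition _ := GRing.isMonoidMorphism.Build L L frobenius_card
  frobenius_card_is_monoid_morphism.

End Frobenius.

Section ConjugatePolynomial.
Context {F : finFieldType} {L : fieldExtType F} (n : nat).
Hypotheses (n_gt0 : (0 < n)%N) (dimL : \dim {:L} = n).
Local Notation q := #|F|.

Lemma adjoin_dim_full (a : L) : a != 0 -> a ^+ `|cycquot q n| != 1 ->
  \dim <<1; a>>%VS = n.
Proof.
move=> a0; apply: contraNeq => dim_lt; set E := <<1; a>>%AS.
have dE : (\dim E %| n)%N by rewrite -dimL field_dimS ?subvf.
have ltEn : (\dim E < n)%N by rewrite ltn_neqAle dim_lt dvdn_leq.
have := expn_subn1_dvd_cycquot (finNzRing_gt1 F) n_gt0 (adim_gt0 E) dE ltEn.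
case/dvdnP=> k ->.
rewrite mulnC exprM; suff -> : a ^+ (q ^ \dim E - 1) = 1 by rewrite expr1n.
have /esym/eqP aE := Fermat's_little_theorem E a; rewrite memv_adjoin in aE.
apply: (mulIf a0); rewrite mul1r -exprSr subn1 prednK ?aE //.
by rewrite expn_gt0 ltnW // finNzRing_gt1.
Qed.

Definition conj_poly (a : L) : {poly L} := \prod_(i < n) ('X - (a ^+ (q ^ i))%:P).

Lemma conj_polyE (a : L) :
  conj_poly a = \prod_(z <- mkseq (fun i => a ^+ (q ^ i)) n) ('X - z%:P).
Proof.
rewrite /conj_poly -(big_mkord xpredT (fun i => 'X - (a ^+ (q ^ i))%:P)).
by rewrite /mkseq big_map /index_iota subn0.
Qed.

Lemma conj_poly_monic (a : L) : conj_poly a \is monic.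
Proof. by rewrite conj_polyE monic_prod_XsubC. Qed.

Lemma size_conj_poly (a : L) : size (conj_poly a) = n.+1.
Proof. by rewrite conj_polyE size_prod_XsubC size_mkseq. Qed.

Lemma root_conj_poly (a : L) : root (conj_poly a) a.
Proof.
rewrite /root /conj_poly horner_prod (bigD1 (Ordinal n_gt0)) //= !hornerE.
by rewrite expn0 expr1 subrr mul0r.
Qed.

(* Frobenius permutes the roots a^(q^i) cyclically, as a^(q^n) = a. *)
Lemma conj_poly_over (a : L) : conj_poly a \is a polyOver 1%VS.
Proof.
have frobE : map_poly (frobenius_card L) (conj_poly a) = conj_poly a.
  rewrite map_prod_XsubC.
  under eq_bigr => i _ do rewrite /= /frobenius_card -exprM -expnSr.
  pose g i := ('X - (a ^+ (q ^ i))%:P : {poly L}).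
  apply: (@mulfI _ (g 0%N)); first by rewrite polyXsubC_eq0.
  rewrite -(big_ord_recl n g) big_ord_recr /= mulrC; congr (_ * _).
  by rewrite /g expr_card_ext // expn0 expr1.
apply/polyOverP => i; rewrite mem1v_expr_card.
have := congr1 (fun p : {poly L} => p`_i) frobE.
by rewrite coef_map /= /frobenius_card => ->.
Qed.

Lemma minPoly_conj_poly (a : L) :
  \dim <<1; a>>%VS = n -> minPoly 1 a = conj_poly a.
Proof.
move=> dim_a; have dvd_min := minPoly_dvdp (conj_poly_over a) (root_conj_poly a).
apply/eqP; rewrite -eqp_monic ?monic_minPoly ?conj_poly_monic //.
rewrite -dvdp_size_eqp // size_minPoly size_conj_poly eqSS.
by have := dim_Fadjoin 1%AS a; rewrite dim_a dimv1 muln1 => ->.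
Qed.

Lemma coef_conj_poly (a : L) w : (w <= n)%N ->
  (conj_poly a)`_(n - w) =
    (-1) ^+ w * \sum_(I : {set 'I_n} | #|I| == w) a ^+ expsum q I.
Proof.
move=> le_wn; rewrite conj_polyE coef_prod_XsubC size_mkseq ?leq_subr // subKn //.
congr (_ * _); apply: eq_bigr => I _; rewrite /expsum -prodrXr.
by apply: eq_bigr => i _; rewrite nth_mkseq.
Qed.

Lemma irreducible_conj_poly (a : L) : \dim <<1; a>>%VS = n ->
  exists P : {poly F}, [/\ irreducible_poly P, P \is monic, size P = n.+1
                         & map_poly (in_alg L) P = conj_poly a].
Proof.
move=> dim_a; have /polyOver1P [P PE] := conj_poly_over a.
have P_monic : P \is monic by rewrite -(map_monic (in_alg L)) -PE conj_poly_monic.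
have P_size : size P = n.+1 by rewrite -(size_map_poly (in_alg L)) -PE size_conj_poly.
exists P; split=> //; split=> [|Q Q_size dvdQP]; first by rewrite P_size ltnS.
have QL_over : map_poly (in_alg L) Q \is a polyOver 1%VS by apply/polyOver1P; exists Q.
have := @minPoly_irr _ L 1%AS a _ QL_over.
rewrite minPoly_conj_poly // PE dvdp_map => /(_ dvdQP).
rewrite eqp_map => /orP[//|]; rewrite -(rmorph1 (map_poly (in_alg L))) eqp_map.
by move/eqp_size; rewrite size_poly1 => Q1; rewrite Q1 in Q_size.
Qed.

End ConjugatePolynomial.

Section Identities.
Context {F : finFieldType} {L : fieldExtType F} {n : nat}.
Hypotheses (n_gt0 : (0 < n)%N) (dimL : \dim {:L} = n).
Variables (W : {set 'I_n.+1}) (c : F).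
Hypothesis q2W : #|F| = 2%N -> ord_max \notin W.
Local Notation q := #|F|.

(* For q = 2 the full set sums to 2^n - 1, i.e. to 0 in Z_(2^n - 1). *)
Lemma expsum_lt_W {w : 'I_n.+1} : w \in W ->
  forall I : {set 'I_n}, #|I| = w -> (expsum q I < q ^ n - 1)%N.
Proof.
move=> wW I cardI; apply: (expsum_lt _ (finNzRing_gt1 F) I n_gt0).
have [lt_wn | le_nw] := ltnP w n.
  apply/orP; right; apply: contraTneq lt_wn => IT.
  by rewrite -cardI IT cardsT card_ord ltnn.
have w_max : w = ord_max.
  by apply/val_inj/eqP; rewrite /= eqn_leq le_nw andbT -ltnS ltn_ord.
apply/orP; left; rewrite ltn_neqAle finNzRing_gt1 andbT eq_sym.
by apply/eqP => /q2W; rewrite -w_max wW.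
Qed.

Lemma Ssum_conj_poly {P : {poly F}} {a : L} :
  map_poly (in_alg L) P = conj_poly n a ->
  (Ssum (negset W) P)%:A =
  \sum_(w in W) (-1) ^+ w * \sum_(I : {set 'I_n} | #|I| == w) a ^+ expsum q I.
Proof.
move=> PE; rewrite /Ssum /negset -in_algE rmorph_sum big_imset /=; last first.
  by move=> x y _ _; apply: rev_ord_inj.
apply: eq_bigr => w _; have := congr1 (fun p : {poly L} => p`_(rev_ord w)) PE.
by rewrite coef_map /= => ->; rewrite subSS coef_conj_poly // leq_ord.
Qed.

Lemma cyc_eval_gammaWc {P : {poly F}} {a : L} :
  map_poly (in_alg L) P = conj_poly n a ->
  cyc_eval (gammaWc W c) a = (Ssum (negset W) P - c)%:A.
Proof.
move=> PE; rewrite scalerBl (Ssum_conj_poly PE) /gammaWc cyc_evalB cyc_eval_sum.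
rewrite cyc_evalZ cyc_eval_delta0 //; congr (_ - _); apply: eq_bigr => w wW.
rewrite cyc_evalZ (cyc_eval_delta n_gt0 _ _ (expsum_lt_W wW)).
by rewrite -mulr_algl -in_algE rmorph_sign.
Qed.

Lemma cyc_eval_DeltaWc {P : {poly F}} {a : L} : a != 0 ->
  map_poly (in_alg L) P = conj_poly n a ->
  cyc_eval (DeltaWc W c) a = (1 - (Ssum (negset W) P - c) ^+ q.-1)%:A.
Proof.
move=> a0 PE; have q1_gt0 : (0 < q.-1)%N by rewrite -subn1 subn_gt0 finNzRing_gt1.
rewrite /DeltaWc cyc_evalB cyc_eval_delta0 // cyc_eval_convpow //.
by rewrite (cyc_eval_gammaWc PE) -[RHS]in_algE rmorphB rmorph1 rmorphXn.
Qed.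

End Identities.

Theorem lemma3p2 (F : finFieldType) (n : nat) (W : {set 'I_n.+1}) (c : F) :
  (2 <= n)%N ->
  (#|F| = 2%N -> ord_max \notin W) ->
  ((forall r, is_least_period (gammaWc W c) r -> ~~ (r%:Z %| cycquot #|F| n)%Z) ->
     exists P : {poly F}, [/\ irreducible_poly P, P \is monic, size P = n.+1
                            & Ssum (negset W) P != c])
  /\
  ((forall r, is_least_period (DeltaWc W c) r -> ~~ (r%:Z %| cycquot #|F| n)%Z) ->
     exists P : {poly F}, [/\ irreducible_poly P, P \is monic, size P = n.+1
                            & Ssum (negset W) P = c]).
Proof.
move=> n_ge2 q2W; have n_gt0 : (0 < n)%N := ltnW n_ge2.
have [L dimL] := finField_extension F n_gt0.
have nonperiodic (f : 'I_(#|F| ^ n - 1) -> F) :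
    (forall r, is_least_period f r -> ~~ (r%:Z %| cycquot #|F| n)%Z) ->
    ~ periodic f `|cycquot #|F| n|%N.
  move=> ndvd; apply: (nonperiodic_least_period_ndvdn _ (card_expn_subn1_gt0 n_gt0)).
  by move=> r /ndvd; rewrite dvdzE.
have conj_irr (a : L) : a != 0 -> a ^+ `|cycquot #|F| n| != 1 ->
    exists P : {poly F}, [/\ irreducible_poly P, P \is monic, size P = n.+1
                           & map_poly (in_alg L) P = conj_poly n a].
  by move=> a0 aM; apply/irreducible_conj_poly/adjoin_dim_full.
split=> ndvd; apply: NNPP => noP; apply: (nonperiodic _ ndvd).
  apply: (periodic_cyc_eval n_gt0 dimL) => a a0 aM.
  have [P [P_irr P_monic P_size PE]] := conj_irr a a0 aM.
  rewrite (cyc_eval_gammaWc n_gt0 W c q2W PE).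
  have [->|Sc] := eqVneq (Ssum (negset W) P) c; first by rewrite subrr scale0r.
  by case: noP; exists P.
apply: (periodic_cyc_eval n_gt0 dimL) => a a0 aM.
have [P [P_irr P_monic P_size PE]] := conj_irr a a0 aM.
have Sc : Ssum (negset W) P - c != 0.
  by rewrite subr_eq0; apply/eqP => Sc; apply: noP; exists P.
rewrite (cyc_eval_DeltaWc n_gt0 dimL W c q2W a0 PE) expf_card_pred //.
by rewrite subrr scale0r.
Qed.
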